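(* Let $k$ be an $\mathbf{F}_p$-algebra, $m\in\mathbf{N}\cup\{\infty\}$, $O_m:=\mathbf{F}_p[[\pi]]/(\pi^{m+1})$ and $A:=k[[\pi]]/(\pi^{m+1})$. Let $\iota:\operatorname{HS}^m(k)\to\operatorname{HS}^m(A)$ be induced by the inclusion $k\subset A$, let $J\subset\operatorname{HS}^m(A)$ be the ideal generated by $d^{[n]}\pi^i-\delta_{ni}$ for all $0\le n\le m$ and $i\ge0$, and let $\rho:\operatorname{HS}^m(k)\to\operatorname{HS}^m(A)/J$ be the composite of $\iota$ with the quotient map. Then $\iota$ is injective, $\rho$ is surjective, and there are mutually inverse ring isomorphisms between $\operatorname{HS}^m(A)\otimes_{\operatorname{HS}^m(O_m)}\mathbf{F}_p$ and $\operatorname{HS}^m(A)/J$ compatible with the natural maps from $\operatorname{HS}^m(A)$ to each.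
   Context: For a ring $R$ and $m\in\mathbf{N}\cup\{\infty\}$, $\operatorname{HS}^m(R):=\mathbf{Z}[d^{[n]}a\mid a\in R,0\le n\le m]/\sim$, where $\sim$ is generated by $d^{[n]}(a+b)=d^{[n]}a+d^{[n]}b$, $d^{[n]}(ab)=\sum_{i+j=n}d^{[i]}a\,d^{[j]}b$, and $d^{[0]}1=1$; it is functorial in $R$ via $d^{[n]}a\mapsto d^{[n]}f(a)$. Here $\pi^{\infty+1}:=0$. The map $O_m\to A$ is the inclusion of coefficients $\mathbf{F}_p\subset k$, giving $\operatorname{HS}^m(O_m)\to\operatorname{HS}^m(A)$, and $\operatorname{HS}^m(O_m)\to\mathbf{F}_p$ is the ring homomorphism $d^{[n]}a\mapsto a_n$, where $a=\sum_ia_i\pi^i$ with $a_i\in\mathbf{F}_p$. $\delta_{ni}$ is the Kronecker delta. *)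

From HB Require Import structures.
From mathcomp Require Import all_boot all_algebra.
From mathcomp Require Import generic_quotient ring_quotient.
From mathcomp Require Import boolp.
From mathcomp Require Import finmap.
From mathcomp.multinomials Require Import monalg.
Set Implicit Arguments. Unset Strict Implicit. Unset Printing Implicit Defensive.
Import GRing.Theory.
Local Open Scope ring_scope.
Local Open Scope quotient_scope.

Definition is_ideal (R : comPzRingType) (I : R -> Prop) : Prop :=
  [/\ I 0, (forall x y, I x -> I y -> I (x + y)) & (forall a x, I x -> I (a * x))].

Definition ideal_gen (R : comPzRingType) (S : R -> Prop) : R -> Prop :=
  fun x => forall I : R -> Prop, is_ideal I -> (forall s, S s -> I s) -> I x.

Section QuotBy.
Variables (R : comPzRingType) (S : R -> Prop).
Definition ideal_pred : {pred R} := fun x => `[< ideal_gen S x >].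
Lemma ideal_pred_zmod : zmod_closed ideal_pred.
Proof.
split=> [|x y]; rewrite /ideal_pred /in_mem /=.
  by apply/asboolP => I [] .
move=> /asboolP hx /asboolP hy; apply/asboolP => I hI hS.
case: (hI) => _ hD hM; rewrite -mulN1r mulrC; apply: hD; first exact: hx.
by rewrite mulrC; apply: hM; exact: hy.
Qed.
HB.instance Definition _ := GRing.isZmodClosed.Build R ideal_pred ideal_pred_zmod.
Definition quot_by := Quotient.quot ideal_pred.
HB.instance Definition _ := GRing.Zmodule.on quot_by.
Definition qone : quot_by := lift_cst quot_by 1.
Definition qmul := lift_op2 quot_by *%R.
Canonical pi_qone_morph := PiConst qone.
Lemma ideal_predM a x : x \in ideal_pred -> a * x \in ideal_pred.
Proof.
rewrite /ideal_pred /in_mem /= => /asboolP hx; apply/asboolP => I hI hS.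
by case: (hI) => _ _ hM; apply: hM; exact: hx.
Qed.
Lemma pi_qmul : {morph \pi_quot_by : x y / x * y >-> qmul x y}.
Proof.
move=> x y; unlock qmul; apply/eqP; rewrite piE Quotient.equivE.
rewrite -[_ * _](addrNK (x * repr (\pi_quot_by y))) -mulrBr.
rewrite -addrA -mulrBl rpredD //.
  by rewrite ideal_predM // Quotient.idealrDE opprK reprK.
by rewrite mulrC ideal_predM // Quotient.idealrDE opprK reprK.
Qed.
Canonical pi_qmul_morph := PiMorph2 pi_qmul.
Lemma qmulA : associative qmul.
Proof. by move=> x y z; rewrite -[x]reprK -[y]reprK -[z]reprK !piE mulrA. Qed.
Lemma qmulC : commutative qmul.
Proof. by move=> x y; rewrite -[x]reprK -[y]reprK !piE mulrC. Qed.
Lemma qmul1 : left_id qone qmul.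
Proof. by move=> x; rewrite -[x]reprK !piE mul1r. Qed.
Lemma qmulDl : left_distributive qmul +%R.
Proof.
move=> x y z; rewrite -[x]reprK -[y]reprK -[z]reprK.
by rewrite !piE mulrDl.
Qed.
HB.instance Definition _ := GRing.Zmodule_isComPzRing.Build quot_by
  qmulA qmulC qmul1 qmulDl.
Definition quot_pi : R -> quot_by := \pi_quot_by.
End QuotBy.

(* ---------- m in N ∪ {∞} as option nat (None = ∞) ---------- *)
Definition le_m (m : option nat) (n : nat) : bool :=
  if m is Some m' then (n <= m')%N else true.

(* ---------- truncated power series R[[pi]]/(pi^(m+1)) ---------- *)
Record tps (R : comPzRingType) (m : option nat) := TPS {
  tps_coef : nat -> R;
  _ : forall n, ~~ le_m m n -> tps_coef n = 0 }.
Arguments tps_coef {R m}.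

Section TPS.
Variables (R : comPzRingType) (m : option nat).
HB.instance Definition _ := gen_eqMixin (tps R m).
HB.instance Definition _ := gen_choiceMixin (tps R m).
Lemma trunc_subproof (f : nat -> R) n :
  ~~ le_m m n -> (if le_m m n then f n else 0) = 0.
Proof. by move/negPf ->. Qed.
Definition trunc (f : nat -> R) : tps R m :=
  @TPS R m (fun n => if le_m m n then f n else 0) (trunc_subproof f).
Definition tps_add (a b : tps R m) : tps R m :=
  trunc (fun n => tps_coef a n + tps_coef b n).
Definition tps_mul (a b : tps R m) : tps R m :=
  trunc (fun n => \sum_(i < n.+1) tps_coef a i * tps_coef b (n - i)).
Definition tps_one : tps R m := trunc (fun n => (n == 0%N)%:R).
Definition tps_const (c : R) : tps R m := trunc (fun n => if n == 0%N then c else 0).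
Definition tps_pi : tps R m := trunc (fun n => (n == 1%N)%:R).
Definition tps_exp (a : tps R m) (i : nat) : tps R m := iter i (tps_mul a) tps_one.
End TPS.

Definition zpoly (I : choiceType) := {malg int[{cmonom I}]}.
Definition zX (I : choiceType) (i : I) : zpoly I := << ucm i >>.
Definition peval (I : choiceType) (S : comPzRingType) (v : I -> S) (q : zpoly I) : S :=
  \sum_(k <- msupp q) (q@_k)%:~R * \prod_(i <- finsupp k) v i ^+ (k i).

Section HSdef.
Variables (T : choiceType) (add mul : T -> T -> T) (one : T) (m : option nat).
Definition hsidx := {x : T * nat | le_m m x.2}.
Definition hs_d (a : T) (n : nat) : zpoly hsidx :=
  if @insub _ (fun x : T * nat => le_m m x.2) hsidx (a, n) is Some i then zX i else 0.
Definition hs_rel (x : zpoly hsidx) : Prop :=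
  [\/ exists a b n, le_m m n /\ x = hs_d (add a b) n - (hs_d a n + hs_d b n),
      exists a b n, le_m m n /\
        x = hs_d (mul a b) n - \sum_(i < n.+1) hs_d a i * hs_d b (n - i)
    | x = hs_d one 0 - 1].
Definition HS : comPzRingType := quot_by hs_rel.
Definition hs_dd (a : T) (n : nat) : HS := quot_pi hs_rel (hs_d a n).
End HSdef.

Definition hs_map (T : choiceType) (add mul : T -> T -> T) (one : T)
  (T' : choiceType) (add' mul' : T' -> T' -> T') (one' : T') (m : option nat)
  (f : T -> T') (x : HS add mul one m) : HS add' mul' one' m :=
  quot_pi _ (peval (fun i : hsidx T m => @hs_d T' m (f (val i).1) (val i).2) (repr x)).

Section Prop62.
Variables (p : nat) (k : comPzRingType) (m : option nat).

Definition Aring := tps k m.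
Definition Oring := tps 'F_p m.
Definition HSk : comPzRingType := HS +%R *%R (1 : k) m.
Definition HSA : comPzRingType := HS (@tps_add k m) (@tps_mul k m) (@tps_one k m) m.
Definition HSO : comPzRingType :=
  HS (@tps_add 'F_p m) (@tps_mul 'F_p m) (@tps_one 'F_p m) m.

Definition hs_iota : HSk -> HSA :=
  @hs_map k +%R *%R 1 Aring (@tps_add k m) (@tps_mul k m) (@tps_one k m) m
    (@tps_const k m).

Definition Fp_to_k (x : 'F_p) : k := (nat_of_ord x)%:R.
Definition O_to_A (a : Oring) : Aring := trunc m (fun n => Fp_to_k (tps_coef a n)).
Definition HSO_to_HSA : HSO -> HSA :=
  @hs_map Oring (@tps_add 'F_p m) (@tps_mul 'F_p m) (@tps_one 'F_p m)
    Aring (@tps_add k m) (@tps_mul k m) (@tps_one k m) m O_to_A.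

Definition HSO_aug (x : HSO) : 'F_p :=
  peval (fun i : hsidx Oring m => tps_coef (val i).1 (val i).2) (repr x).

Definition Jgen (y : HSA) : Prop :=
  exists n i : nat, le_m m n /\
    y = hs_dd (@tps_add k m) (@tps_mul k m) (@tps_one k m) m
              (tps_exp (tps_pi k m) i) n - (n == i)%:R.
Definition HSAJ : comPzRingType := quot_by Jgen.
Definition qJ : HSA -> HSAJ := quot_pi Jgen.
Definition hs_rho (x : HSk) : HSAJ := qJ (hs_iota x).
End Prop62.
Arguments hs_iota : clear implicits.
Arguments hs_rho : clear implicits.
Arguments HSO_aug : clear implicits.
Arguments HSO_to_HSA : clear implicits.
Arguments qJ : clear implicits.
Arguments Jgen : clear implicits.
Arguments Fp_to_k : clear implicits.
Arguments O_to_A : clear implicits.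

(* (T, u, v) is a pushout of B <-f- C -g-> D in commutative rings, i.e.
   T = B ⊗_C D with its natural maps *)
Definition is_pushout (C B D : comPzRingType) (f : C -> B) (g : C -> D)
  (T : comPzRingType) (u : {rmorphism B -> T}) (v : {rmorphism D -> T}) : Prop :=
  (forall c, u (f c) = v (g c)) /\
  forall (S : comPzRingType) (u' : {rmorphism B -> S}) (v' : {rmorphism D -> S}),
    (forall c, u' (f c) = v' (g c)) ->
    exists h : {rmorphism T -> S},
      [/\ forall b, h (u b) = u' b, forall d, h (v d) = v' d &
          forall h' : {rmorphism T -> S},
            (forall b, h' (u b) = u' b) -> (forall d, h' (v d) = v' d) ->
            forall t, h' t = h t].

(* HS^m(A) retracts onto HS^m(k) through the map induced by A -> k, a |-> a_0,
   so iota is injective.  Modulo J the Leibniz rule collapses on a = a_0 + pi b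
   to d^[n+1] a = d^[n+1] a_0 + d^[n] b, whence d^[n] a = sum_j d^[n-j] a_j and rho
   is onto.  Every generator of J is the image of an element of HS^m(O_m) killed
   by the augmentation, and the quotient map is compatible with the augmentation
   through F_p -> HS^m(A)/J; hence HS^m(A)/J has the universal property of the
   tensor product, and any pushout is isomorphic to it. *)
From HB Require Import structures.
From mathcomp Require Import all_boot all_algebra.
From mathcomp Require Import generic_quotient ring_quotient boolp finmap.
From mathcomp.multinomials Require Import monalg.
Set Implicit Arguments. Unset Strict Implicit. Unset Printing Implicit Defensive.
Import GRing.Theory.
Local Open Scope ring_scope.

Definition pack_rmorphism (R T : pzRingType) (f : R -> T)
    (fB : zmod_morphism f) (fM : monoid_morphism f) : {rmorphism R -> T} :=
  HB.pack f (GRing.isZmodMorphism.Build _ _ f fB)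
    (GRing.isMonoidMorphism.Build _ _ f fM).

Section QuotBy.
Variables (R : comPzRingType) (S : R -> Prop).
Local Notation qpi := (quot_pi S).

Fact quot_pi_is_zmod_morphism : zmod_morphism qpi.
Proof. by move=> x y; rewrite /quot_pi [RHS]piE. Qed.

Fact quot_pi_is_monoid_morphism : monoid_morphism qpi.
Proof. by split=> [|x y]; rewrite /quot_pi [RHS]piE. Qed.

HB.instance Definition _ :=
  GRing.isZmodMorphism.Build R (quot_by S) qpi quot_pi_is_zmod_morphism.
HB.instance Definition _ :=
  GRing.isMonoidMorphism.Build R (quot_by S) qpi quot_pi_is_monoid_morphism.

Lemma quot_piK : cancel repr qpi.
Proof. exact: reprK. Qed.

Lemma quot_pi_eq0 x : (qpi x = 0) <-> (x \in ideal_pred S).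
Proof.
rewrite -(rmorph0 qpi) /quot_pi.
by split=> [/eqP|h]; [|apply/eqP]; rewrite eqmodE /= Quotient.equivE subr0.
Qed.

Lemma quot_pi_gen s : S s -> qpi s = 0.
Proof. by move=> Ss; apply/quot_pi_eq0/asboolP => I _; apply. Qed.

Section Lift.
Variables (T : comPzRingType) (f : {rmorphism R -> T}).
Hypothesis fS : forall s, S s -> f s = 0.

Lemma rmorph_ideal_pred x : x \in ideal_pred S -> f x = 0.
Proof.
move=> /asboolP/(_ (fun y => f y = 0)); apply=> //.
split=> [|a b fa fb|a b fb]; first exact: rmorph0.
  by rewrite rmorphD fa fb addr0.
by rewrite rmorphM fb mulr0.
Qed.

Definition quot_lift_fun (y : quot_by S) : T := f (repr y).

Lemma quot_lift_funE x : quot_lift_fun (qpi x) = f x.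
Proof.
apply/eqP; rewrite -subr_eq0 -rmorphB; apply/eqP/rmorph_ideal_pred.
by apply/quot_pi_eq0; rewrite rmorphB /= quot_piK subrr.
Qed.

Fact quot_lift_is_zmod_morphism : zmod_morphism quot_lift_fun.
Proof.
move=> y z; rewrite -[y]quot_piK -[z]quot_piK -rmorphB /=.
by rewrite !quot_lift_funE rmorphB.
Qed.

Fact quot_lift_is_monoid_morphism : monoid_morphism quot_lift_fun.
Proof.
split=> [|y z]; first by rewrite -(rmorph1 qpi) /= quot_lift_funE rmorph1.
by rewrite -[y]quot_piK -[z]quot_piK -rmorphM /= !quot_lift_funE rmorphM.
Qed.

Definition quot_lift : {rmorphism quot_by S -> T} :=
  pack_rmorphism quot_lift_is_zmod_morphism quot_lift_is_monoid_morphism.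

Lemma quot_liftE x : quot_lift (qpi x) = f x.
Proof. exact: quot_lift_funE. Qed.
End Lift.
End QuotBy.

Section Peval.
Local Open Scope fset_scope.
Local Open Scope ring_scope.
Variables (I : choiceType) (S : comPzRingType) (v : I -> S).

Definition mon_eval (k : cmonom I) : S := \prod_(i <- finsupp k) v i ^+ k i.

Lemma mon_evalEw (d : {fset I}) (k : cmonom I) :
  finsupp k `<=` d -> mon_eval k = \prod_(i <- d) v i ^+ k i.
Proof.
move=> le; rewrite /mon_eval (big_fset_incl _ le) // => i _.
by rewrite -cmE_neq0 negbK => /eqP ->; rewrite expr0.
Qed.

Lemma mon_evalM (k1 k2 : cmonom I) : mon_eval (mmul k1 k2) = mon_eval k1 * mon_eval k2.
Proof.
rewrite (@mon_evalEw (finsupp k1 `|` finsupp k2)); last by rewrite mdomD.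
rewrite (mon_evalEw (fsubsetUl _ (finsupp k2))) (mon_evalEw (fsubsetUr (finsupp k1) _)).
by rewrite -big_split; apply: eq_bigr => i _; rewrite cmM exprD.
Qed.

Lemma mon_eval1 : mon_eval mone = 1.
Proof. by rewrite /mon_eval mdom1 big_seq_fset0. Qed.

Lemma mon_evalU i : mon_eval (ucm i) = v i.
Proof. by rewrite /mon_eval mdomU big_seq_fset1 cmUU expr1. Qed.

Lemma pevalEw (d : {fset cmonom I}) (q : zpoly I) : msupp q `<=` d ->
  peval v q = \sum_(k <- d) (q@_k)%:~R * mon_eval k.
Proof.
move=> le; rewrite /peval (big_fset_incl _ le) // => k _ /mcoeff_outdom ->.
by rewrite mul0r.
Qed.

Lemma pevalU (c : int) (k : cmonom I) : peval v << c *g k >> = c%:~R * mon_eval k.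
Proof. by rewrite (pevalEw msuppU_le) big_seq_fset1 mcoeffUU. Qed.

Lemma pevalD (q1 q2 : zpoly I) : peval v (q1 + q2) = peval v q1 + peval v q2.
Proof.
rewrite (pevalEw (msuppD_le q1 q2)) (pevalEw (fsubsetUl _ (msupp q2))).
rewrite (pevalEw (fsubsetUr (msupp q1) _)) -big_split.
by apply: eq_bigr => k _; rewrite mcoeffD intrD mulrDl.
Qed.

Fact peval_is_zmod_morphism : zmod_morphism (peval v).
Proof.
have peval0 : peval v 0 = 0 by rewrite /peval msupp0 big_seq_fset0.
have pevalN q : peval v (- q) = - peval v q.
  by apply: (@addrI _ (peval v q)); rewrite -pevalD !subrr.
by move=> q1 q2; rewrite pevalD pevalN.
Qed.

HB.instance Definition _ :=
  GRing.isZmodMorphism.Build (zpoly I) S (peval v) peval_is_zmod_morphism.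

Fact peval_is_monoid_morphism : monoid_morphism (peval v).
Proof.
split=> [|q1 q2].
  by rewrite -[1]/(<< (mone : cmonom I) >> : zpoly I) pevalU mon_eval1 mulr1.
rewrite malgME raddf_sum [peval v q1]/peval big_distrl; apply: eq_bigr => k1 _.
rewrite raddf_sum [peval v q2]/peval big_distrr; apply: eq_bigr => k2 _.
by rewrite /= pevalU intrM mon_evalM mulrACA.
Qed.

HB.instance Definition _ :=
  GRing.isMonoidMorphism.Build (zpoly I) S (peval v) peval_is_monoid_morphism.

Lemma peval_zX i : peval v (zX i) = v i.
Proof. by rewrite /zX pevalU mon_evalU mul1r. Qed.
End Peval.

Lemma eq_peval (I : choiceType) (S : comPzRingType) (v1 v2 : I -> S) q :
  v1 =1 v2 -> peval v1 q = peval v2 q.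
Proof.
by move=> e; apply: eq_bigr => k _; congr (_ * _); apply: eq_bigr => i _; rewrite e.
Qed.

Lemma peval_rmorph (I : choiceType) (S T : comPzRingType) (g : {rmorphism S -> T})
    (v : I -> S) q :
  g (peval v q) = peval (g \o v) q.
Proof.
rewrite /peval rmorph_sum; apply: eq_bigr => k _.
rewrite rmorphM rmorph_int rmorph_prod; congr (_ * _).
by apply: eq_bigr => i _; rewrite rmorphXn.
Qed.

Section PevalVariables.
Variable I : choiceType.

Lemma malgU_prod (J : Type) (r : seq J) (P : pred J) (F : J -> cmonom I) :
  \prod_(j <- r | P j) (<< F j >> : zpoly I) = << \big[mmul/mone]_(j <- r | P j) F j >>.
Proof.
apply: (big_rec2 (fun a b => a = << b >>)); first by rewrite mpolyC1E.
by move=> j a b _ ->; rewrite malgM_def fgmulUU mulr1.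
Qed.

Lemma cmonom_prod_ucm (k : cmonom I) :
  \big[mmul/mone]_(i <- finsupp k) \big[mmul/mone]_(0 <= j < k i) ucm i = k.
Proof.
apply/eqP/cmP => x.
have cm_big (J : Type) (r : seq J) (F : J -> cmonom I) :
    (\big[mmul/mone]_(j <- r) F j) x = (\sum_(j <- r) F j x)%N.
  by elim: r => [|j r IH]; rewrite ?big_nil ?cm1 // !big_cons cmM IH.
rewrite cm_big; under eq_bigr => i _ do
  rewrite cm_big (eq_bigr _ (fun j _ => cmU i x)) sum_nat_const_nat subn0.
case: (mdomP k x) => kx.
  rewrite (big_fsetD1 x) //= eqxx muln1 big_seq big1 ?addn0 // => i.
  by rewrite in_fsetD1 => /andP[/negbTE]; rewrite eq_sym => ->; rewrite muln0.
rewrite big_seq big1 // => i ki; case: eqP => [ix|_]; last by rewrite muln0.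
by move: kx; rewrite -ix ki.
Qed.

Lemma mon_eval_zX (k : cmonom I) : mon_eval (@zX I) k = << k >>.
Proof.
rewrite /mon_eval; under eq_bigr => i _ do
  rewrite -(subn0 (k i)) -prodr_const_nat /zX malgU_prod.
by rewrite malgU_prod cmonom_prod_ucm.
Qed.

Lemma peval_zX_id (q : zpoly I) : peval (@zX I) q = q.
Proof.
rewrite [RHS]monalgE /peval; apply: eq_bigr => k _.
rewrite -/(mon_eval _ k) mon_eval_zX mulrzl -raddfMz; congr (mkmalgU _ _).
exact: intz.
Qed.
End PevalVariables.

Lemma le_m0 m : le_m m 0.
Proof. by case: m. Qed.

Lemma le_m_trans m n i : le_m m n -> (i <= n)%N -> le_m m i.
Proof. by case: m => //= m' h1 h2; apply: leq_trans h2 h1. Qed.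

Section HSGenerators.
Variables (T : choiceType) (add mul : T -> T -> T) (one : T) (m : option nat).
Local Notation HSr := (HS add mul one m).
Local Notation dd := (hs_dd add mul one m).
Local Notation rel := (@hs_rel T add mul one m).
Local Notation qpi := (quot_pi rel).

Lemma hs_d_val (i : hsidx T m) : @hs_d T m (val i).1 (val i).2 = zX i.
Proof. by rewrite /hs_d -surjective_pairing valK. Qed.

Lemma peval_hs_d (S : comPzRingType) (w : T -> nat -> S) a n :
  peval (fun i : hsidx T m => w (val i).1 (val i).2) (@hs_d T m a n)
  = if le_m m n then w a n else 0.
Proof.
rewrite /hs_d; case: insubP => [i /= mn vi | /negbTE /= ->]; last exact: rmorph0.
by rewrite peval_zX vi mn.
Qed.

Lemma hs_dd_out a n : ~~ le_m m n -> dd a n = 0.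
Proof. by move=> h; rewrite /hs_dd /hs_d insubF ?rmorph0 //; apply/negbTE. Qed.

Lemma hs_rel_eq x y : rel (x - y) -> qpi x = qpi y.
Proof. by move=> /(quot_pi_gen (S := rel)) /eqP; rewrite rmorphB subr_eq0 => /eqP. Qed.

Lemma hs_ddD a b n : le_m m n -> dd (add a b) n = dd a n + dd b n.
Proof. by move=> h; rewrite -rmorphD; apply: hs_rel_eq; apply: Or31; exists a, b, n. Qed.

Lemma hs_ddM a b n : le_m m n ->
  dd (mul a b) n = \sum_(i < n.+1) dd a i * dd b (n - i).
Proof.
move=> h; under eq_bigr => i _ do rewrite -rmorphM.
by rewrite -rmorph_sum; apply: hs_rel_eq; apply: Or32; exists a, b, n.
Qed.

Lemma hs_dd1 : dd one 0 = 1.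
Proof. by rewrite -(rmorph1 qpi); apply: hs_rel_eq; apply: Or33. Qed.

Lemma hs_dd_addid z n : add z z = z -> dd z n = 0.
Proof.
move=> zz; have [mn|/hs_dd_out//] := boolP (le_m m n).
by apply: (@addrI _ (dd z n)); rewrite addr0 -hs_ddD // zz.
Qed.

Lemma hs_dd_one n : mul one one = one -> dd one n = (n == 0)%:R.
Proof.
move=> one2; have [mn|mn] := boolP (le_m m n); last first.
  by rewrite hs_dd_out //; case: n mn => [|n]; rewrite ?le_m0.
elim/ltn_ind: n mn => -[_|n IH] mn; first exact: hs_dd1.
have := hs_ddM one one mn; rewrite one2 big_ord_recl big_ord_recr big1 => [|i _].
  rewrite /= subn0 subnn hs_dd1 mul1r mulr1 add0r => e.
  by apply: (@addrI _ (dd one n.+1)); rewrite addr0 -e.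
have lt_i_n : (i.+1 <= n)%N := ltn_ord i.
by rewrite lift0 IH ?mul0r ?(le_m_trans mn) // ltnW.
Qed.

Lemma HS_peval (x : HSr) : x = peval (fun i => dd (val i).1 (val i).2) (repr x).
Proof.
rewrite -{1}[x]quot_piK -{1}(peval_zX_id (repr x)) peval_rmorph.
by apply: eq_peval => i; rewrite /= /hs_dd hs_d_val.
Qed.

Lemma eq_rmorph_HS (S : comPzRingType) (g h : {rmorphism HSr -> S}) :
  (forall a n, le_m m n -> g (dd a n) = h (dd a n)) -> g =1 h.
Proof.
move=> e x; rewrite [x]HS_peval !peval_rmorph.
by apply: eq_peval => i; exact: e (valP i).
Qed.

Section Lift.
Variables (S : comPzRingType) (w : T -> nat -> S).
Hypotheses (wD : forall a b n, le_m m n -> w (add a b) n = w a n + w b n)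
  (wM : forall a b n, le_m m n ->
          w (mul a b) n = \sum_(i < n.+1) w a i * w b (n - i))
  (w1 : w one 0 = 1).
Local Notation W := (fun i : hsidx T m => w (val i).1 (val i).2).

Lemma peval_hs_rel s : rel s -> peval W s = 0.
Proof.
case=> [[a [b [n [h ->]]]]|[a [b [n [h ->]]]]|->]; rewrite rmorphB /=.
- by rewrite rmorphD /= !peval_hs_d h wD // subrr.
- rewrite rmorph_sum peval_hs_d h wM //; apply/eqP; rewrite subr_eq0.
  apply/eqP/eq_bigr => i _.
  rewrite rmorphM /= !peval_hs_d (le_m_trans h (leq_subr i n)).
  by rewrite (le_m_trans h (ltnSE (ltn_ord i))).
- by rewrite rmorph1 peval_hs_d le_m0 w1 subrr.
Qed.

Definition hs_lift : {rmorphism HSr -> S} := quot_lift peval_hs_rel.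

Lemma hs_lift_dd a n : hs_lift (dd a n) = if le_m m n then w a n else 0.
Proof. by rewrite /hs_dd quot_liftE /= peval_hs_d. Qed.
End Lift.
End HSGenerators.

Section HSFunctor.
Variables (T T' : choiceType) (add mul : T -> T -> T) (one : T)
  (add' mul' : T' -> T' -> T') (one' : T') (m : option nat) (f : T -> T').
Hypotheses (fD : forall a b, f (add a b) = add' (f a) (f b))
  (fM : forall a b, f (mul a b) = mul' (f a) (f b)) (f1 : f one = one').
Local Notation dd' := (hs_dd add' mul' one' m).
Local Notation hsf := (@hs_map T add mul one T' add' mul' one' m f).

Fact hs_dd_mapD a b n : le_m m n -> dd' (f (add a b)) n = dd' (f a) n + dd' (f b) n.
Proof. by move=> mn; rewrite fD hs_ddD. Qed.

Fact hs_dd_mapM a b n : le_m m n ->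
  dd' (f (mul a b)) n = \sum_(i < n.+1) dd' (f a) i * dd' (f b) (n - i).
Proof. by move=> mn; rewrite fM hs_ddM. Qed.

Fact hs_dd_map1 : dd' (f one) 0 = 1.
Proof. by rewrite f1 hs_dd1. Qed.

Lemma hs_mapE x : hsf x = hs_lift hs_dd_mapD hs_dd_mapM hs_dd_map1 x.
Proof. exact: peval_rmorph. Qed.

Fact hs_map_is_zmod_morphism : zmod_morphism hsf.
Proof. by move=> x y; rewrite !hs_mapE rmorphB. Qed.

Fact hs_map_is_monoid_morphism : monoid_morphism hsf.
Proof. by split=> [|x y]; rewrite !hs_mapE (rmorph1, rmorphM). Qed.

Definition hs_map_rmorphism : {rmorphism HS add mul one m -> HS add' mul' one' m} :=
  pack_rmorphism hs_map_is_zmod_morphism hs_map_is_monoid_morphism.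

Lemma hs_map_dd a n :
  hsf (hs_dd add mul one m a n) = if le_m m n then dd' (f a) n else 0.
Proof. by rewrite hs_mapE hs_lift_dd. Qed.
End HSFunctor.

Lemma hs_map_can (T T' : choiceType) (add mul : T -> T -> T) (one : T)
    (add' mul' : T' -> T' -> T') (one' : T') (m : option nat)
    (f : T -> T') (g : T' -> T)
    (fD : forall a b, f (add a b) = add' (f a) (f b))
    (fM : forall a b, f (mul a b) = mul' (f a) (f b)) (f1 : f one = one')
    (gD : forall a b, g (add' a b) = add (g a) (g b))
    (gM : forall a b, g (mul' a b) = mul (g a) (g b)) (g1 : g one' = one) :
  cancel f g -> cancel (@hs_map T add mul one T' add' mul' one' m f)
                       (@hs_map T' add' mul' one' T add mul one m g).
Proof.
move=> fK; pose F := hs_map_rmorphism m fD fM f1; pose G := hs_map_rmorphism m gD gM g1.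
apply: (eq_rmorph_HS (g := G \o F) (h := idfun)) => a n mn /=.
by rewrite (hs_map_dd _ fD fM f1) mn (hs_map_dd _ gD gM g1) mn fK.
Qed.

Section TruncatedPowerSeries.
Variables (R : comPzRingType) (m : option nat).
Local Notation A := (tps R m).
Local Notation cf := (@tps_coef R m).
Local Notation pi := (tps_pi R m).

Lemma tps_ext (a b : A) : (forall n, le_m m n -> cf a n = cf b n) -> a = b.
Proof.
case: a b => [fa ha] [fb hb] /= e.
have efg : fa = fb.
  by apply: funext => n; case mn: (le_m m n); [exact: e | rewrite ha ?hb ?mn].
by subst fb; congr TPS; exact: Prop_irrelevance.
Qed.

Lemma tps_coef_trunc (f : nat -> R) n : le_m m n -> cf (trunc m f) n = f n.
Proof. by move=> /= ->. Qed.

Lemma tps_coefD (a b : A) n : le_m m n -> cf (tps_add a b) n = cf a n + cf b n.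
Proof. exact: tps_coef_trunc. Qed.

Lemma tps_coefM (a b : A) n : le_m m n ->
  cf (tps_mul a b) n = \sum_(i < n.+1) cf a i * cf b (n - i).
Proof. exact: tps_coef_trunc. Qed.

Lemma tps_coef1 n : le_m m n -> cf (tps_one R m) n = (n == 0)%:R.
Proof. exact: tps_coef_trunc. Qed.

Lemma tps_coefC (c : R) n : le_m m n -> cf (tps_const m c) n = if n == 0 then c else 0.
Proof. exact: tps_coef_trunc. Qed.

Lemma tps_coef_pi n : le_m m n -> cf pi n = (n == 1)%:R.
Proof. exact: tps_coef_trunc. Qed.

Lemma tps_coef0D (a b : A) : cf (tps_add a b) 0 = cf a 0 + cf b 0.
Proof. exact: tps_coefD (le_m0 m). Qed.

Lemma tps_coef0M (a b : A) : cf (tps_mul a b) 0 = cf a 0 * cf b 0.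
Proof. by rewrite tps_coefM ?le_m0 // big_ord1. Qed.

Lemma tps_coef01 : cf (tps_one R m) 0 = 1.
Proof. exact: tps_coef1 (le_m0 m). Qed.

Lemma tps_coef0C : cancel (tps_const m) (cf^~ 0).
Proof. by move=> c; rewrite tps_coefC ?le_m0. Qed.

Arguments tps_coef : simpl never.

Lemma tps_constD (a b : R) :
  tps_const m (a + b) = tps_add (tps_const m a) (tps_const m b).
Proof.
by apply: tps_ext => n mn; rewrite tps_coefD // !tps_coefC //; case: eqP; rewrite ?addr0.
Qed.

Lemma tps_constM (a b : R) :
  tps_const m (a * b) = tps_mul (tps_const m a) (tps_const m b).
Proof.
apply: tps_ext => n mn; rewrite tps_coefM // big_ord_recl big1 => [|i _].
  rewrite addr0 subn0 !tps_coefC ?le_m0 //.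
  by case: eqP; rewrite ?mulr0.
by rewrite tps_coefC ?(le_m_trans mn (ltn_ord i)) // mul0r.
Qed.

Lemma tps_const1 : tps_const m 1 = tps_one R m.
Proof. by apply: tps_ext => n mn; rewrite tps_coefC // tps_coef1 //; case: eqP. Qed.

Lemma tps_mulr1 (a : A) : tps_mul a (tps_one R m) = a.
Proof.
apply: tps_ext => n mn; rewrite tps_coefM // big_ord_recr big1 => [|i _] /=.
  by rewrite add0r subnn tps_coef1 ?le_m0 // mulr1.
rewrite tps_coef1 ?(le_m_trans mn (leq_subr _ _)) //.
by rewrite subn_eq0 leqNgt ltn_ord mulr0.
Qed.

Lemma tps_coef_pi_mul0 (b : A) : cf (tps_mul pi b) 0 = 0.
Proof. by rewrite tps_coefM ?le_m0 // big_ord1 tps_coef_pi ?le_m0 // mul0r. Qed.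

Lemma tps_coef_pi_mulS (b : A) n : le_m m n.+1 -> cf (tps_mul pi b) n.+1 = cf b n.
Proof.
move=> mn; rewrite tps_coefM // big_ord_recl tps_coef_pi ?le_m0 // mul0r add0r.
rewrite big_ord_recl big1 => [|i _]; rewrite !lift0.
  by rewrite tps_coef_pi ?(le_m_trans mn (isT : 1 <= n.+1)%N) // mul1r addr0 subSS subn0.
by rewrite tps_coef_pi ?(le_m_trans (i := i.+2) mn (ltn_ord i)) //= mul0r.
Qed.

Definition tps_shift (a : A) : A := trunc m (fun n => cf a n.+1).

Lemma tps_shiftE (a : A) : a = tps_add (tps_const m (cf a 0)) (tps_mul pi (tps_shift a)).
Proof.
apply: tps_ext => -[|n] mn; rewrite tps_coefD // tps_coefC //=.
  by rewrite tps_coef_pi_mul0 addr0.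
by rewrite add0r tps_coef_pi_mulS // tps_coef_trunc // (le_m_trans mn (leqnSn n)).
Qed.

Lemma tps_coef_exp_pi i n : le_m m n -> cf (tps_exp pi i) n = (n == i)%:R.
Proof.
elim: i n => [|i IH] [|n] mn; rewrite ?tps_coef1 // /tps_exp iterS -/(tps_exp _ i).
  by rewrite tps_coef_pi_mul0.
by rewrite tps_coef_pi_mulS // IH // (le_m_trans mn (leqnSn n)).
Qed.
End TruncatedPowerSeries.

Section PushoutQuotient.
Variables (C B D T : comPzRingType) (f : C -> B) (g : C -> D)
  (u : {rmorphism B -> T}) (v : {rmorphism D -> T}) (S : B -> Prop)
  (w : {rmorphism D -> quot_by S}).
Hypotheses (po : is_pushout f g u v) (g_surj : forall d, exists c, g c = d)
  (S_ker : forall s, S s -> exists2 c, f c = s & g c = 0)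
  (fw : forall c, quot_pi S (f c) = w (g c)).

Lemma pushout_quot_iso :
  exists (phi : {rmorphism T -> quot_by S}) (psi : {rmorphism quot_by S -> T}),
    [/\ cancel phi psi, cancel psi phi,
        forall b, phi (u b) = quot_pi S b & forall b, psi (quot_pi S b) = u b].
Proof.
have [uv univ] := po.
have uS s : S s -> u s = 0 by case/S_ker=> c <- gc0; rewrite uv gc0 rmorph0.
have [phi [phiu phiv _]] := univ _ (quot_pi S) w fw.
pose psi := quot_lift uS.
have psiq b : psi (quot_pi S b) = u b := quot_liftE uS b.
exists phi, psi; split=> // [t|y]; last by rewrite -[y]quot_piK psiq phiu.
have [idT [_ _ idT_uniq]] := univ T u v uv.
have -> : psi (phi t) = idT t.
  apply: (idT_uniq (psi \o phi)) => [b|d] /=; first by rewrite phiu; apply: psiq.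
  by have [c <-] := g_surj d; rewrite phiv -fw -uv; apply: psiq.
by symmetry; apply: (idT_uniq idfun).
Qed.
End PushoutQuotient.

Section FpMorphism.
Variables (p : nat) (R : comPzRingType).
Hypotheses (pp : prime p) (pR : p%:R = 0 :> R).

Lemma Fp_to_k_nat n : Fp_to_k p R n%:R = n%:R.
Proof.
by rewrite /Fp_to_k val_Fp_nat // {2}(divn_eq n p) natrD natrM pR mulr0 add0r.
Qed.

Fact Fp_to_k_is_zmod_morphism : zmod_morphism (Fp_to_k p R).
Proof.
have FpD a b : Fp_to_k p R (a + b) = Fp_to_k p R a + Fp_to_k p R b.
  by rewrite -[a]natr_Zp -[b]natr_Zp -natrD !Fp_to_k_nat natrD.
by move=> x y; apply: (canRL (addrK _)); rewrite -FpD subrK.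
Qed.

Fact Fp_to_k_is_monoid_morphism : monoid_morphism (Fp_to_k p R).
Proof.
split=> [|x y]; first by rewrite -[1]/(1%:R : 'F_p) Fp_to_k_nat.
by rewrite -[x]natr_Zp -[y]natr_Zp -natrM !Fp_to_k_nat natrM.
Qed.

Definition Fp_to_k_rmorphism : {rmorphism 'F_p -> R} :=
  pack_rmorphism Fp_to_k_is_zmod_morphism Fp_to_k_is_monoid_morphism.
End FpMorphism.

Section HSTruncated.
Variables (k : comPzRingType) (m : option nat).
Local Notation A := (tps k m).
Local Notation pi := (tps_pi k m).
Local Notation cfA := (@tps_coef k m).
Local Notation ddA := (hs_dd (@tps_add k m) (@tps_mul k m) (@tps_one k m) m).
Local Notation ddk := (hs_dd +%R *%R (1 : k) m).
Local Notation qJ := (qJ k m).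

HB.instance Definition _ := GRing.RMorphism.copy qJ (quot_pi (Jgen k m)).

Definition hs_iota_rmorphism : {rmorphism HSk k m -> HSA k m} :=
  hs_map_rmorphism m (@tps_constD k m) (@tps_constM k m) (tps_const1 k m).

Lemma hs_iota_dd a n : le_m m n -> hs_iota k m (ddk a n) = ddA (tps_const m a) n.
Proof.
move=> mn; have := hs_map_dd m (@tps_constD k m) (@tps_constM k m) (tps_const1 k m) a n.
by rewrite mn.
Qed.

Lemma hs_iota_inj : injective (hs_iota k m).
Proof.
apply: can_inj (hs_map_can (g := cfA^~ 0) (@tps_constD k m) (@tps_constM k m)
  (tps_const1 k m) (@tps_coef0D k m) (@tps_coef0M k m) (tps_coef01 k m) _).
exact: tps_coef0C.
Qed.

Lemma hs_ddA_const_nat (c : nat) n : ddA (tps_const m c%:R) n = c%:R * (n == 0)%:R.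
Proof.
have [mn|mn] := boolP (le_m m n); last first.
  by rewrite hs_dd_out //; case: n mn => [|n]; rewrite ?le_m0 ?mulr0.
elim: c => [|c IH]; first by rewrite mul0r hs_dd_addid // -tps_constD addr0.
rewrite mulrS tps_constD hs_ddD // IH tps_const1 hs_dd_one ?tps_mulr1 //.
by rewrite mulrSr mulrDl mul1r addrC.
Qed.

Lemma qJ_dd_pi n : le_m m n -> qJ (ddA pi n) = (n == 1)%:R.
Proof.
move=> mn; apply/eqP; rewrite -(rmorph_nat qJ) -subr_eq0 -rmorphB; apply/eqP.
by apply: quot_pi_gen; exists n, 1%N; rewrite /tps_exp /= tps_mulr1.
Qed.

Lemma qJ_dd_pi_mul (b : A) n : le_m m n ->
  qJ (ddA (tps_mul pi b) n) = if n is n'.+1 then qJ (ddA b n') else 0.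
Proof.
move=> mn; rewrite hs_ddM // rmorph_sum /= big_ord_recl.
have qJ_pi0 b' : qJ (ddA pi 0 * b') = 0 by rewrite rmorphM /= qJ_dd_pi ?le_m0 // mul0r.
case: n mn => [|n] mn; first by rewrite big_ord0 addr0 qJ_pi0.
rewrite qJ_pi0 add0r big_ord_recl big1 => [|i _]; rewrite !lift0 rmorphM /=.
  by rewrite qJ_dd_pi ?(le_m_trans mn (isT : 1 <= n.+1)%N) // mul1r addr0 subSS subn0.
by rewrite qJ_dd_pi ?(le_m_trans (i := i.+2) mn (ltn_ord i)) //= mul0r.
Qed.

Lemma qJ_dd_expand (a : A) n : le_m m n ->
  qJ (ddA a n) = \sum_(i < n.+1) qJ (ddA (tps_const m (cfA a i)) (n - i)).
Proof.
elim: n a => [|n IH] a mn; rewrite {1}(tps_shiftE a) hs_ddD // rmorphD /= qJ_dd_pi_mul //.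
  by rewrite big_ord1 addr0.
rewrite big_ord_recl IH ?(le_m_trans mn (leqnSn n)) //; congr (_ + _).
apply: eq_bigr => i _; rewrite lift0 subSS tps_coef_trunc //.
exact: le_m_trans mn (ltnW (ltn_ord i)).
Qed.

Lemma hs_rho_surj y : exists x, hs_rho k m x = y.
Proof.
pose s (a : A) n := \sum_(j < n.+1) ddk (cfA a j) (n - j).
pose rho : {rmorphism HSk k m -> HSAJ k m} := qJ \o hs_iota_rmorphism.
have rho_s a n : le_m m n -> qJ (ddA a n) = rho (s a n).
  move=> mn; rewrite qJ_dd_expand // /s rmorph_sum; apply: eq_bigr => j _ /=.
  by apply/congr1/esym/hs_iota_dd; exact: le_m_trans mn (leq_subr _ _).
rewrite -[y]quot_piK [repr y]HS_peval peval_rmorph.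
exists (peval (fun i => s (val i).1 (val i).2) (repr (repr y))).
apply: etrans (peval_rmorph rho _ _) _; apply: eq_peval => i /=.
by symmetry; exact: rho_s (valP i).
Qed.
End HSTruncated.

Section HSAugmentation.
Variables (p : nat) (k : comPzRingType) (m : option nat).
Hypotheses (pp : prime p) (pk : (p%:R : k) = 0).
Local Notation OA := (O_to_A p k m).
Local Notation cfO := (@tps_coef 'F_p m).
Local Notation ddA := (hs_dd (@tps_add k m) (@tps_mul k m) (@tps_one k m) m).
Local Notation ddO := (hs_dd (@tps_add 'F_p m) (@tps_mul 'F_p m) (@tps_one 'F_p m) m).
Local Notation Fp := (Fp_to_k_rmorphism pp pk).

Lemma tps_coef_O_to_A a n : le_m m n -> tps_coef (OA a) n = Fp (cfO a n).
Proof. exact: tps_coef_trunc. Qed.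

Lemma O_to_AD a b : OA (tps_add a b) = tps_add (OA a) (OA b).
Proof.
apply: tps_ext => n mn.
by rewrite tps_coefD // !tps_coef_O_to_A // tps_coefD // rmorphD.
Qed.

Lemma O_to_AM a b : OA (tps_mul a b) = tps_mul (OA a) (OA b).
Proof.
apply: tps_ext => n mn; rewrite tps_coefM // !tps_coef_O_to_A // tps_coefM // rmorph_sum.
apply: eq_bigr => i _; rewrite rmorphM !tps_coef_O_to_A //.
  exact: le_m_trans mn (leq_subr _ _).
exact: le_m_trans mn (ltnSE (ltn_ord i)).
Qed.

Lemma O_to_A1 : OA (tps_one 'F_p m) = tps_one k m.
Proof.
apply: tps_ext => n mn.
by rewrite tps_coef_O_to_A // !tps_coef1 // rmorph_nat.
Qed.

Lemma O_to_A_exp_pi i : OA (tps_exp (tps_pi 'F_p m) i) = tps_exp (tps_pi k m) i.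
Proof.
apply: tps_ext => n mn.
by rewrite tps_coef_O_to_A // !tps_coef_exp_pi // rmorph_nat.
Qed.

(* The underlying functions of these two morphisms are [HSO_to_HSA p k m] and
   [HSO_aug p m] up to conversion. *)
Definition HSO_to_HSA_rmorphism : {rmorphism HSO p m -> HSA k m} :=
  hs_map_rmorphism m O_to_AD O_to_AM O_to_A1.

Definition HSO_aug_rmorphism : {rmorphism HSO p m -> 'F_p} :=
  hs_lift (@tps_coefD 'F_p m) (@tps_coefM 'F_p m) (tps_coef01 'F_p m).

Lemma HSO_aug_surj d : exists c, HSO_aug p m c = d.
Proof. by exists d%:R; exact: etrans (rmorph_nat HSO_aug_rmorphism _) (natr_Zp d). Qed.

Lemma HSAJ_char : (p%:R : HSAJ k m) = 0.
Proof.
have p_dd : (p%:R : HSA k m) = ddA (tps_const m p%:R) 0.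
  by rewrite hs_ddA_const_nat mulr1.
by rewrite -(rmorph_nat (qJ k m)) p_dd pk hs_dd_addid ?rmorph0 // -tps_constD addr0.
Qed.

Lemma HSO_to_HSA_dd a n : le_m m n -> HSO_to_HSA_rmorphism (ddO a n) = ddA (OA a) n.
Proof. by move=> mn; have := hs_map_dd m O_to_AD O_to_AM O_to_A1 a n; rewrite mn. Qed.

Lemma HSO_aug_dd a n : le_m m n -> HSO_aug_rmorphism (ddO a n) = cfO a n.
Proof.
move=> mn.
have := hs_lift_dd (@tps_coefD 'F_p m) (@tps_coefM 'F_p m) (tps_coef01 'F_p m) a n.
by rewrite mn.
Qed.

Lemma qJ_HSO_to_HSA c :
  qJ k m (HSO_to_HSA p k m c) = Fp_to_k_rmorphism pp HSAJ_char (HSO_aug p m c).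
Proof.
apply: (eq_rmorph_HS (g := qJ k m \o HSO_to_HSA_rmorphism)
  (h := Fp_to_k_rmorphism pp HSAJ_char \o HSO_aug_rmorphism)) => a n mn.
rewrite -[LHS]/(qJ k m (HSO_to_HSA_rmorphism (ddO a n))).
rewrite -[RHS]/(Fp_to_k_rmorphism pp HSAJ_char (HSO_aug_rmorphism (ddO a n))).
rewrite HSO_to_HSA_dd // HSO_aug_dd // qJ_dd_expand //.
under eq_bigr => j _ do rewrite tps_coef_O_to_A ?(le_m_trans mn (ltnSE (ltn_ord j))) //
  hs_ddA_const_nat rmorphM !rmorph_nat -natrM.
rewrite big_ord_recr big1 => [|j _] /=; first by rewrite add0r subnn muln1.
by rewrite subn_eq0 leqNgt ltn_ord muln0.
Qed.

Lemma Jgen_HSO_image s :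
  Jgen k m s -> exists2 c, HSO_to_HSA p k m c = s & HSO_aug p m c = 0.
Proof.
case=> n [i [mn ->]]; exists (ddO (tps_exp (tps_pi 'F_p m) i) n - (n == i)%:R).
  rewrite -[LHS]/(HSO_to_HSA_rmorphism _) rmorphB rmorph_nat.
  by rewrite HSO_to_HSA_dd // O_to_A_exp_pi.
rewrite -[LHS]/(HSO_aug_rmorphism _) rmorphB rmorph_nat.
by rewrite HSO_aug_dd // tps_coef_exp_pi // subrr.
Qed.
End HSAugmentation.

Theorem proposition6p2 (p : nat) (k : comPzRingType) (m : option nat) :
  prime p -> (p%:R : k) = 0 ->
  [/\ injective (hs_iota k m),
      (forall y : HSAJ k m, exists x : HSk k m, hs_rho k m x = y) &
      forall (T : comPzRingType) (u : {rmorphism HSA k m -> T})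
             (v : {rmorphism 'F_p -> T}),
        is_pushout (HSO_to_HSA p k m) (HSO_aug p m) u v ->
        exists (phi : {rmorphism T -> HSAJ k m}) (psi : {rmorphism HSAJ k m -> T}),
          [/\ cancel phi psi, cancel psi phi,
              (forall c, phi (u c) = qJ k m c) & (forall c, psi (qJ k m c) = u c)]].
Proof.
move=> pp pk; split; [exact: hs_iota_inj | exact: hs_rho_surj |].
move=> T u v po.
exact: pushout_quot_iso po (@HSO_aug_surj p m) (Jgen_HSO_image pp pk)
  (qJ_HSO_to_HSA pp pk).
Qed.
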